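(* Let $H$ be a connected graph with $k=|V(H)|>1$ vertices that does not contain two true twins or does not contain two false twins. Then for every $p\in[0,1)$ there is no deterministic algorithm solving the Delayed Connected $H$-Node-Deletion Problem with predictions that has both consistency less than $k-\frac{1}{2-p}(k-1)$ and robustness less than $k+\frac{p}{1-p}$.
   Context: All graphs are finite, simple and undirected. Two distinct vertices are false twins if they have the same open neighborhood, and true twins if they have the same closed neighborhood $N[v]=N(v)\cup\{v\}$. An induced copy of $H$ in $G$ is an induced subgraph isomorphic to $H$; $G$ is $H$-free if it has none. An online graph $G$ has vertices $v_1,\dots,v_n$ revealed one at a time; $G_t=G[\{v_1,\dots,v_t\}]$. Delayed Connected $H$-Node-Deletion Problem with predictions (fixed connected $H$): when $v_t$ is revealed the algorithm receives a bit $u_t(G)\in\{0,1\}$; it must choose sets $S_1\subseteq\dots\subseteq S_n$ with $S_t\subseteq V(G_t)$ and $G_t-S_t$ $H$-free for each $t$, where $S_t$ depends only on $G_t$ and $u_1(G),\dots,u_t(G)$; the cost is $|S_n|$. $\mathrm{OPT}(G)$ is the minimum size of $S\subseteq V(G)$ with $G-S$ $H$-free. The advice is correct if the set of vertices with bit $1$ is a minimum-size such set. An algorithm is $(r,w)$-competitive if there is a constant $\alpha\ge0$ such that for every online graph $G$: for some correct advice its cost is at most $r\cdot\mathrm{OPT}(G)+\alpha$, and for every advice (correct or not) its cost is at most $w\cdot\mathrm{OPT}(G)+\alpha$. Consistency (resp. robustness) is the infimum of such $r$ (resp. $w$). *)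

From mathcomp Require Import all_boot.
From Stdlib Require Import Reals.

Set Implicit Arguments.
Unset Strict Implicit.
Unset Printing Implicit Defensive.

Definition true_twins (T : finType) (e : rel T) (u v : T) : Prop :=
  u <> v /\ forall z : T, (z == u) || e u z = (z == v) || e v z.

Definition false_twins (T : finType) (e : rel T) (u v : T) : Prop :=
  u <> v /\ forall z : T, e u z = e v z.

(* Online graphs: vertices v_1,...,v_n are represented by 0,...,n-1 in
   reveal order; adj is the (simple, undirected) adjacency relation.
   Only its restriction to {0..n-1} matters. *)
Definition simple_adj (adj : nat -> nat -> bool) : Prop :=
  (forall i j, adj i j = adj j i) /\ (forall i, adj i i = false).

Definition H_free (T : finType) (e : rel T)
    (adj : nat -> nat -> bool) (P : nat -> bool) : Prop :=
  ~ exists f : T -> nat,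
      injective f /\ (forall x, P (f x)) /\
      (forall x y, x <> y -> e x y = adj (f x) (f y)).

Definition trunc_rel (t : nat) (adj : nat -> nat -> bool) : nat -> nat -> bool :=
  fun i j => [&& i < t, j < t & adj i j].
Definition trunc_pred (t : nat) (u : nat -> bool) : nat -> bool :=
  fun i => (i < t) && u i.

(* A deterministic online algorithm: at time t it is given (only) G_t and
   u_1,...,u_t and outputs the set S_t (as a predicate on vertices). *)
Definition algorithm := nat -> (nat -> nat -> bool) -> (nat -> bool) -> (nat -> bool).

Definition alg_out (A : algorithm) (t : nat) (adj : nat -> nat -> bool)
    (u : nat -> bool) : nat -> bool :=
  A t (trunc_rel t adj) (trunc_pred t u).

Definition valid_alg (T : finType) (e : rel T) (A : algorithm) : Prop :=
  forall (adj : nat -> nat -> bool) (u : nat -> bool), simple_adj adj ->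
  forall t, 1 <= t ->
    (forall i, alg_out A t adj u i -> i < t) /\
    (forall i, alg_out A t adj u i -> alg_out A t.+1 adj u i) /\
    H_free e (trunc_rel t adj) (fun i => (i < t) && ~~ alg_out A t adj u i).

Definition cost (A : algorithm) (n : nat) (adj : nat -> nat -> bool)
    (u : nat -> bool) : nat :=
  count (alg_out A n adj u) (iota 0 n).

Definition deletion_set (T : finType) (e : rel T) (n : nat)
    (adj : nat -> nat -> bool) (S : nat -> bool) : Prop :=
  H_free e (trunc_rel n adj) (fun i => (i < n) && ~~ S i).

Definition is_opt (T : finType) (e : rel T) (n : nat)
    (adj : nat -> nat -> bool) (m : nat) : Prop :=
  (exists S, deletion_set e n adj S /\ count S (iota 0 n) = m) /\
  (forall S, deletion_set e n adj S -> m <= count S (iota 0 n)).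

Definition correct_advice (T : finType) (e : rel T) (n : nat)
    (adj : nat -> nat -> bool) (u : nat -> bool) : Prop :=
  deletion_set e n adj u /\ is_opt e n adj (count u (iota 0 n)).

Definition competitive (T : finType) (e : rel T) (A : algorithm) (r w : R) : Prop :=
  exists alpha : R, (0 <= alpha)%R /\
  forall (n : nat) (adj : nat -> nat -> bool), simple_adj adj ->
  forall m, is_opt e n adj m ->
    (exists u, correct_advice e n adj u /\
       (INR (cost A n adj u) <= r * INR m + alpha)%R) /\
    (forall u, (INR (cost A n adj u) <= w * INR m + alpha)%R).

(* Blow up every vertex of H into an independent set (if H has no false
   twins) or a clique (if H has no true twins).  An induced subgraph of the
   blow-up is H-free exactly when some class of copies is entirely deleted, so
   OPT is the size of a smallest class.  The adversary first shows one copy of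
   each vertex of H and then always a copy of a vertex whose class the
   algorithm has entirely deleted; surviving vertices therefore copy distinct
   vertices of H, and after t steps the cost is at least t - k.  The advice
   marks the copies of a fixed x0.  Robustness bounds the cost by w m, m the
   smallest class size; padding the other classes until that of x0 is the
   unique smallest one makes this advice the only correct one, and the
   algorithm cannot foresee the padding, so consistency bounds the cost by
   r a, a the size of the class of x0.  As a + (k - 1) m <= t, letting t grow
   forces (r - 1) (w - k + 1) >= k - 1, which the bounds on r and w exclude. *)

From mathcomp Require Import all_boot.
From Stdlib Require Import Reals FunctionalExtensionality Lra Psatz.

Set Implicit Arguments.
Unset Strict Implicit.
Unset Printing Implicit Defensive.

Section Blowup.
Variables (T : finType) (e : rel T) (tw : bool).

Definition twins_of : T -> T -> Prop := if tw then true_twins e else false_twins e.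

(* Vertex [i] is a copy of [c i]; copies of one vertex of [H] are pairwise
   adjacent if [tw] and pairwise non-adjacent otherwise. *)
Definition blowup (c : nat -> T) : nat -> nat -> bool :=
  fun i j => (i != j) && (e (c i) (c j) || tw && (c i == c j)).

Definition color_class (c : nat -> T) (n : nat) (x : T) : seq nat :=
  [seq i <- iota 0 n | c i == x].

Lemma blowup_simple c : symmetric e -> simple_adj (blowup c).
Proof.
move=> e_sym; split=> [i j|i]; rewrite /blowup ?eqxx //.
by rewrite eq_sym e_sym [c j == c i]eq_sym.
Qed.

Lemma mem_color_class c n x i : (i \in color_class c n x) = (c i == x) && (i < n).
Proof. by rewrite mem_filter mem_iota add0n. Qed.

Lemma color_class_uniq c n x : uniq (color_class c n x).
Proof. exact/filter_uniq/iota_uniq. Qed.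

Lemma color_class_deleted_count c n S x :
  all S (color_class c n x) -> size (color_class c n x) <= count S (iota 0 n).
Proof.
move=> /allP delx; rewrite -size_filter uniq_leq_size ?color_class_uniq // => i ix.
by rewrite mem_filter delx // mem_iota; move: ix; rewrite mem_color_class => /andP[].
Qed.

Lemma sum_color_class_size c n : \sum_(x : T) size (color_class c n x) = n.
Proof.
rewrite /color_class -[RHS](size_iota 0); elim: (iota 0 n) => [|i s IH] /=.
  by rewrite big1.
rewrite -IH (bigD1 (c i)) //= eqxx [in RHS](bigD1 (c i)) //= addSn; congr (_.+1 + _).
by apply: eq_bigr => x /negbTE; rewrite eq_sym => ->.
Qed.

Lemma pad_color_classes c t x : exists n c',
  [/\ t <= n, forall i, i < t -> c' i = c i,
      size (color_class c' n x) = size (color_class c t x) &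
      forall y, y != x -> size (color_class c' n x) < size (color_class c' n y)].
Proof.
set a := size (color_class c t x).
set l := flatten (nseq a.+1 [seq y <- enum T | y != x]).
pose c' i := if i < t then c i else nth x l (i - t).
have count_l y : count (pred1 y) l = (y != x) * a.+1.
  rewrite count_flatten map_nseq sumn_nseq count_uniq_mem ?filter_uniq ?enum_uniq //.
    by rewrite mem_filter mem_enum andbT.
  by rewrite -enumT enum_uniq.
have size_c' y : size (color_class c' (t + size l) y)
                 = size (color_class c t y) + (y != x) * a.+1.
  rewrite /color_class !size_filter iotaD count_cat -count_l add0n; congr (_ + _).
    by apply: eq_in_count => i; rewrite mem_iota /c' /= => ->.
  rewrite -[in RHS](mkseq_nth x l) /mkseq count_map -[t]addn0 iotaDl count_map.
  by apply: eq_count => j; rewrite /c' /= ltnNge leq_addr addKn.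
exists (t + size l), c'; split.
- exact: leq_addr.
- by move=> i it; rewrite /c' it.
- by rewrite size_c' eqxx addn0.
- by move=> y yx; rewrite !size_c' eqxx yx addn0 mul1n ltn_addl.
Qed.

Hypotheses (e_irr : irreflexive e) (no_twins : forall y z, ~ twins_of y z).

Lemma blowup_embedding_twins c n f y z :
  (forall x, f x < n) -> injective f ->
  (forall x x', x <> x' -> e x x' = trunc_rel n (blowup c) (f x) (f x')) ->
  y <> z -> c (f y) = c (f z) -> twins_of y z.
Proof.
move=> f_lt f_inj f_emb y_z cfyz.
have emb x x' : x <> x' -> e x x' = e (c (f x)) (c (f x')) || tw && (c (f x) == c (f x')).
  move=> x_x'; rewrite f_emb // /trunc_rel /blowup !f_lt.
  by have -> : f x != f x' by apply/eqP => /f_inj.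
have eyz : e y z = tw by rewrite emb // cfyz eqxx e_irr andbT.
have ezy : e z y = tw by rewrite (emb z y (nesym y_z)) cfyz eqxx e_irr andbT.
rewrite /twins_of; case: tw emb eyz ezy => emb eyz ezy; split=> // w.
- case: (eqVneq w y) => [->|/eqP w_y]; first by rewrite ezy orbT.
  case: (eqVneq w z) => [->|/eqP w_z]; first by rewrite eyz.
  by rewrite (emb y w (nesym w_y)) (emb z w (nesym w_z)) cfyz.
- case: (eqVneq w y) => [->|/eqP w_y]; first by rewrite ezy e_irr.
  case: (eqVneq w z) => [->|/eqP w_z]; first by rewrite eyz e_irr.
  by rewrite (emb y w (nesym w_y)) (emb z w (nesym w_z)) cfyz.
Qed.

Lemma blowup_deletion_setP c n S :
  deletion_set e n (blowup c) S <-> exists x, all S (color_class c n x).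
Proof.
split=> [Hfree|[x delx] [f [f_inj [f_P f_emb]]]].
  apply/existsP; apply: contraT => /existsPn none; exfalso; apply: Hfree.
  have /fin_all_exists[f f_class] x : exists i, (i \in color_class c n x) && ~~ S i.
    by have /allPn[i ix Si] := none x; exists i; rewrite ix.
  have {}f_class x : [/\ c (f x) = x, f x < n & ~~ S (f x)].
    by have /andP[] := f_class x; rewrite mem_color_class => /andP[/eqP -> ->] ->.
  exists f; split; [|split].
  - by move=> x y fxy; have [<- _ _] := f_class x; rewrite fxy; have [-> _ _] := f_class y.
  - by move=> x; have [_ -> ->] := f_class x.
  - move=> x y x_y; have [cx nx _] := f_class x; have [cy ny _] := f_class y.
    rewrite /trunc_rel /blowup nx ny cx cy (_ : (x == y) = false) ?andbF ?orbF.
      by rewrite (_ : f x != f y) //; apply/eqP => fxy; apply: x_y; rewrite -cx -cy fxy.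
    exact/eqP.
have f_lt y : f y < n by have /andP[] := f_P y.
case: (boolP (injectiveb (c \o f))) => [/injectiveP cf_inj|/injectivePn[y [z yz cfyz]]].
  have [g _ gK] := injF_bij cf_inj.
  have /andP[_ /negP] := f_P (g x); apply; apply: (allP delx).
  by rewrite mem_color_class f_lt andbT; apply/eqP/gK.
have {}yz : y <> z by apply/eqP.
by case: (no_twins (blowup_embedding_twins f_lt f_inj f_emb yz cfyz)).
Qed.

Lemma color_class_deletion_set c n x : deletion_set e n (blowup c) (fun i => c i == x).
Proof.
apply/blowup_deletion_setP; exists x.
by apply/allP => i; rewrite mem_color_class => /andP[].
Qed.

Lemma blowup_is_opt c n x :
  (forall y, size (color_class c n x) <= size (color_class c n y)) ->
  is_opt e n (blowup c) (size (color_class c n x)).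
Proof.
move=> x_min; split.
  exists (fun i => c i == x).
  by split; [apply: color_class_deletion_set|rewrite size_filter].
move=> S /blowup_deletion_setP[y dely].
exact: leq_trans (x_min y) (color_class_deleted_count dely).
Qed.

Lemma blowup_correct_advice c n x u :
  (forall y, y != x -> size (color_class c n x) < size (color_class c n y)) ->
  correct_advice e n (blowup c) u -> forall i, i < n -> u i = (c i == x).
Proof.
move=> x_min [del_u [_ u_opt]] i i_n.
have u_le : count u (iota 0 n) <= size (color_class c n x).
  by rewrite size_filter; apply: u_opt; apply: color_class_deletion_set.
have [y dely] := (blowup_deletion_setP c n u).1 del_u.
have u_ge := color_class_deleted_count dely.
have yx : y = x.
  apply/eqP; apply: contraT => /x_min x_lt.
  by have := leq_trans x_lt (leq_trans u_ge u_le); rewrite ltnn.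
subst y; have sub_u : {subset color_class c n x <= filter u (iota 0 n)}.
  move=> j jx; rewrite mem_filter (allP dely) // mem_iota.
  by move: jx; rewrite mem_color_class => /andP[].
have size_u : size (filter u (iota 0 n)) <= size (color_class c n x) by rewrite size_filter.
have [_ /(_ i)] := uniq_min_size (color_class_uniq c n x) sub_u size_u.
by rewrite mem_color_class mem_filter mem_iota i_n /= !andbT.
Qed.
End Blowup.

Lemma color_class_size_lower_sum (T : finType) (c : nat -> T) n m x :
  (forall y, m <= size (color_class c n y)) ->
  size (color_class c n x) + #|T|.-1 * m <= n.
Proof.
move=> m_min; rewrite -[n in _ <= n](sum_color_class_size c) (bigD1 x) //= leq_add2l.
by rewrite -(cardC1 x) -sum_nat_const; apply: leq_sum => y _.
Qed.

Lemma alg_out_ext (A : algorithm) t adj1 adj2 u1 u2 :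
  (forall i j, i < t -> j < t -> adj1 i j = adj2 i j) ->
  (forall i, i < t -> u1 i = u2 i) -> alg_out A t adj1 u1 = alg_out A t adj2 u2.
Proof.
move=> adj12 u12; rewrite /alg_out /trunc_rel /trunc_pred; congr (A t _ _).
  apply: functional_extensionality => i; apply: functional_extensionality => j.
  by case: (boolP (i < t)) => it; case: (boolP (j < t)) => jt //=; rewrite adj12.
by apply: functional_extensionality => i; case: (boolP (i < t)) => it //=; rewrite u12.
Qed.

Section ValidAlgorithm.
Variables (T : finType) (e : rel T) (A : algorithm).
Variables (adj : nat -> nat -> bool) (u : nat -> bool).
Hypotheses (A_valid : valid_alg e A) (adj_simple : simple_adj adj).

Lemma alg_out_mono t n i : 1 <= t -> t <= n -> alg_out A t adj u i -> alg_out A n adj u i.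
Proof.
move=> t_gt0; elim: n => [|n IH]; first by rewrite leqn0 => /eqP t0; rewrite t0 in t_gt0.
rewrite leq_eqVlt => /orP[/eqP <- //|t_le_n] Si.
by have [_ [mono _]] := A_valid u adj_simple (leq_trans t_gt0 t_le_n); apply/mono/IH.
Qed.

Lemma cost_mono t n : 1 <= t -> t <= n -> cost A t adj u <= cost A n adj u.
Proof.
move=> t_gt0 t_le_n; apply: (@leq_trans (count (alg_out A n adj u) (iota 0 t))).
  by apply: sub_count => i; apply: alg_out_mono.
by rewrite /cost -(subnKC t_le_n) iotaD count_cat leq_addr.
Qed.
End ValidAlgorithm.

Definition competitive_with (T : finType) (e : rel T) (A : algorithm) (r w alpha : R) :
    Prop :=
  forall (n : nat) (adj : nat -> nat -> bool), simple_adj adj ->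
  forall m, is_opt e n adj m ->
    (exists u, correct_advice e n adj u /\
       (INR (cost A n adj u) <= r * INR m + alpha)%R) /\
    (forall u, (INR (cost A n adj u) <= w * INR m + alpha)%R).

Section Competitive.
Variables (T : finType) (e : rel T) (tw : bool) (A : algorithm) (r w alpha : R).
Hypotheses (e_sym : symmetric e) (e_irr : irreflexive e)
  (no_twins : forall y z, ~ twins_of e tw y z)
  (A_valid : valid_alg e A) (A_comp : competitive_with e A r w alpha).

Lemma blowup_cost_robust (x0 : T) c t u : exists m,
  (forall x, m <= size (color_class c t x)) /\
  (INR (cost A t (blowup e tw c) u) <= w * INR m + alpha)%R.
Proof.
have [x _ x_min] := @arg_minnP T x0 xpredT (fun x => size (color_class c t x)) isT.
exists (size (color_class c t x)); split=> [y|]; first exact: x_min.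
have [_ robust] :=
  A_comp (blowup_simple tw c e_sym) (blowup_is_opt e_irr no_twins (fun y => x_min y isT)).
exact: robust.
Qed.

Lemma blowup_cost_consistent c t x : 1 <= t ->
  (INR (cost A t (blowup e tw c) (fun i => c i == x))
     <= r * INR (size (color_class c t x)) + alpha)%R.
Proof.
move=> t_gt0; have [n [c' [t_le_n c'_c <- x_min]]] := pad_color_classes c t x.
have x_min' y : size (color_class c' n x) <= size (color_class c' n y).
  by case: (eqVneq y x) => [-> //|/x_min/ltnW].
have [[u [u_correct u_cost]] _] :=
  A_comp (blowup_simple tw c' e_sym) (blowup_is_opt e_irr no_twins x_min').
have u_c' := blowup_correct_advice e_irr no_twins x_min u_correct.
apply: Rle_trans u_cost; apply/le_INR/leP.
have -> : cost A t (blowup e tw c) (fun i => c i == x) = cost A t (blowup e tw c') u.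
  rewrite /cost (@alg_out_ext A t _ (blowup e tw c') _ u) // => [i j it jt|i it].
    by rewrite /blowup !c'_c.
  by rewrite u_c' ?c'_c // (leq_trans it).
exact: (cost_mono _ A_valid (blowup_simple tw c' e_sym) t_gt0 t_le_n).
Qed.
End Competitive.

Section Adversary.
Variables (T : finType) (e : rel T) (tw : bool) (A : algorithm) (x0 : T).

Definition adv_out (t : nat) (c : nat -> T) : nat -> bool :=
  alg_out A t (blowup e tw c) (fun i => c i == x0).

(* The first [#|T|] vertices copy distinct vertices of [H]; afterwards each
   new vertex copies a vertex of [H] all of whose copies are already deleted. *)
Definition next_color (t : nat) (c : nat -> T) : T :=
  if t < #|T| then nth x0 (enum T) t
  else odflt x0 [pick x | all (adv_out t c) (color_class c t x)].

Fixpoint adv_colors (n : nat) : seq T :=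
  if n is n'.+1 then rcons (adv_colors n') (next_color n' (nth x0 (adv_colors n')))
  else [::].

Definition adv_color (i : nat) : T := nth x0 (adv_colors i.+1) i.

Lemma next_color_ext t c1 c2 :
  (forall i, i < t -> c1 i = c2 i) -> next_color t c1 = next_color t c2.
Proof.
move=> c12; have out12 : adv_out t c1 = adv_out t c2.
  by apply: alg_out_ext => [i j it jt|i it]; rewrite /blowup ?c12.
rewrite /next_color out12; case: (t < #|T|) => //; congr odflt; apply: eq_pick => x /=.
congr all; apply: eq_in_filter => i; rewrite mem_iota => /andP[_ it].
by rewrite c12.
Qed.

Lemma size_adv_colors n : size (adv_colors n) = n.
Proof. by elim: n => //= n IH; rewrite size_rcons IH. Qed.

Lemma nth_adv_colors n i : i < n -> nth x0 (adv_colors n) i = adv_color i.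
Proof.
elim: n => // n IH; rewrite ltnS leq_eqVlt => /orP[/eqP -> //|i_n].
by rewrite /= nth_rcons size_adv_colors i_n IH.
Qed.

Lemma adv_colorE t : adv_color t = next_color t adv_color.
Proof.
rewrite /adv_color /= nth_rcons size_adv_colors ltnn eqxx.
by apply: next_color_ext => i; apply: nth_adv_colors.
Qed.

Hypotheses (e_sym : symmetric e) (e_irr : irreflexive e)
  (no_twins : forall y z, ~ twins_of e tw y z) (A_valid : valid_alg e A).

Let card_T_gt0 : 0 < #|T|.
Proof. by apply/card_gt0P; exists x0. Qed.

Lemma adv_color_deleted t :
  #|T| <= t -> all (adv_out t adv_color) (color_class adv_color t (adv_color t)).
Proof.
move=> t_ge; have t_gt0 : 0 < t := leq_trans card_T_gt0 t_ge.
have [_ [_ Hfree]] :=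
  A_valid (fun i => adv_color i == x0) (blowup_simple tw adv_color e_sym) t_gt0.
have [x delx] := (blowup_deletion_setP e_irr no_twins _ _ _).1 Hfree.
rewrite [adv_color t]adv_colorE /next_color ltnNge t_ge /=.
by case: pickP => [//|none]; rewrite none in delx.
Qed.

Lemma adv_survivors_distinct t i j :
  i < j -> j < t -> ~~ adv_out t adv_color i -> adv_color j != adv_color i.
Proof.
move=> ij jt; apply: contraNneq => c_ji.
case: (ltnP j #|T|) => [j_small|j_big].
  move: c_ji; rewrite !adv_colorE /next_color j_small (ltn_trans ij j_small) => /eqP.
  rewrite nth_uniq ?enum_uniq -?cardE ?(ltn_trans ij) // => /eqP ji.
  by rewrite ji ltnn in ij.
have Sji : adv_out j adv_color i.
  by apply: (allP (adv_color_deleted j_big)); rewrite mem_color_class c_ji eqxx ij.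
have j_gt0 : 0 < j := leq_trans card_T_gt0 j_big.
exact: (alg_out_mono A_valid (blowup_simple tw adv_color e_sym) j_gt0 (ltnW jt) Sji).
Qed.

Lemma adv_cost_ge t :
  t <= cost A t (blowup e tw adv_color) (fun i => adv_color i == x0) + #|T|.
Proof.
have survivors : count (predC (adv_out t adv_color)) (iota 0 t) <= #|T|.
  rewrite -size_filter -(size_map adv_color) -(card_uniqP _) ?max_card //.
  rewrite map_inj_in_uniq ?filter_uniq ?iota_uniq // => i j.
  rewrite !mem_filter !mem_iota /= => /andP[Si it] /andP[Sj jt] cij.
  case: (ltngtP i j) => // [ij|ji].
    by have := adv_survivors_distinct ij jt Si; rewrite cij eqxx.
  by have := adv_survivors_distinct ji it Sj; rewrite cij eqxx.
rewrite -[t in t <= _](size_iota 0) -(count_predC (adv_out t adv_color)).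
by rewrite leq_add2l.
Qed.
End Adversary.

Section Tradeoff.
Local Open Scope R_scope.

Lemma tradeoff_product_lt (K r w p : R) :
  1 < K -> 0 <= p -> p < 1 -> r < K - (K - 1) / (2 - p) -> w < K + p / (1 - p) ->
  Rmax (r - 1) 0 * Rmax (w - K + 1) 0 < K - 1.
Proof.
move=> K_gt1 p_ge0 p_lt1 r_lt w_lt.
have r_lt' : (r - 1) * (2 - p) < (K - 1) * (1 - p).
  have : r * (2 - p) < (K - (K - 1) / (2 - p)) * (2 - p) by apply Rmult_lt_compat_r; lra.
  have : (K - 1) / (2 - p) * (2 - p) = K - 1 by field; lra.
  nra.
have w_lt' : (w - K + 1) * (1 - p) < 1.
  have : w * (1 - p) < (K + p / (1 - p)) * (1 - p) by apply Rmult_lt_compat_r; lra.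
  have : p / (1 - p) * (1 - p) = p by field; lra.
  nra.
rewrite /Rmax; case: Rle_dec => r_le; case: Rle_dec => w_le; try lra.
have : (r - 1) * (2 - p) * ((w - K + 1) * (1 - p)) < (K - 1) * (1 - p) * 1.
  by apply: Rmult_le_0_lt_compat; nra.
nra.
Qed.

Lemma tradeoff_bounded (K r w alpha : R) :
  Rmax (r - 1) 0 * Rmax (w - K + 1) 0 < K - 1 ->
  exists B, forall t a M C, 0 <= a -> 0 <= M -> a + (K - 1) * M <= t ->
    t <= C + K -> C <= w * M + alpha -> C <= r * a + alpha -> t <= B.
Proof.
set X := Rmax (r - 1) 0; set Y := Rmax (w - K + 1) 0 => XY_lt.
have [X_ge X_ge0] : r - 1 <= X /\ 0 <= X by split; [apply: Rmax_l|apply: Rmax_r].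
have [Y_ge Y_ge0] : w - K + 1 <= Y /\ 0 <= Y by split; [apply: Rmax_l|apply: Rmax_r].
set D := K - 1 - X * Y; have D_gt0 : 0 < D by rewrite /D; lra.
exists (K + alpha + Rmax w 0 * ((X + 1) * (alpha + K) / D)).
move=> t a M C a_ge0 M_ge0 sizes t_le Cw Cr.
have a_le : a <= Y * M + alpha + K by nra.
have KM_le : (K - 1) * M <= X * a + alpha + K by nra.
have DM_le : D * M <= (X + 1) * (alpha + K) by rewrite /D; nra.
have M_le : M <= (X + 1) * (alpha + K) / D.
  by apply: (Rmult_le_reg_l D) => //; rewrite /Rdiv -Rmult_assoc Rinv_r_simpl_m; lra.
have w_le : w * M <= Rmax w 0 * ((X + 1) * (alpha + K) / D).
  have := Rmax_l w 0; have := Rmax_r w 0; nra.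
lra.
Qed.
End Tradeoff.

Theorem mainTheorem7 (T : finType) (e : rel T)
  (e_sym : symmetric e) (e_irr : irreflexive e)
  (H_conn : forall x y : T, connect e x y)
  (k_gt1 : 1 < #|T|)
  (twins : (forall u v : T, ~ true_twins e u v) \/
           (forall u v : T, ~ false_twins e u v))
  (p : R) (p_ge0 : (0 <= p)%R) (p_lt1 : (p < 1)%R) :
  ~ exists (A : algorithm) (r w : R),
      valid_alg e A /\ competitive e A r w /\
      (r < INR #|T| - (INR #|T| - 1) / (2 - p))%R /\
      (w < INR #|T| + p / (1 - p))%R.
Proof.
move=> [A [r [w [A_valid [[alpha [_ A_comp]] [r_lt w_lt]]]]]].
have [tw no_twins] : exists tw, forall y z : T, ~ twins_of e tw y z.
  by case: twins => ?; [exists true|exists false].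
have /card_gt0P[x0 _] := ltnW k_gt1.
have K_gt1 : (1 < INR #|T|)%R by apply: (lt_INR 1); apply/ltP.
have [B B_bound] :=
  tradeoff_bounded alpha (tradeoff_product_lt K_gt1 p_ge0 p_lt1 r_lt w_lt).
have [t0 t0_gt] := INR_unbounded B.
set c := adv_color e tw A x0; set t := t0.+1.
have /leP/le_INR cost_lower := adv_cost_ge x0 e_sym e_irr no_twins A_valid t.
have [m [m_min robust]] :=
  blowup_cost_robust e_sym e_irr no_twins A_comp x0 c t (fun i => c i == x0).
have consistent :=
  blowup_cost_consistent e_sym e_irr no_twins A_valid A_comp c x0 (ltn0Sn t0).
have /leP/le_INR sizes := color_class_size_lower_sum x0 m_min.
rewrite plus_INR in cost_lower; rewrite plus_INR mult_INR in sizes.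
have K_pred : (INR #|T| - 1 = INR #|T|.-1)%R.
  by rewrite -[in INR #|T|](prednK (ltnW k_gt1)) S_INR; lra.
rewrite -K_pred in sizes.
have := B_bound _ _ _ _ (pos_INR _) (pos_INR m) sizes cost_lower robust consistent.
have := lt_INR t0 t (elimT ltP (ltnSn t0)); lra.
Qed.
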